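(* Let $G:=\mathrm{Cay}(\Gamma,S)$ be a Cayley graph, $r\ge2$ an integer, and $X$ an $r$-local $2$-separator of $G$. Then no cycle in $G$ of length at most $r$ strongly traverses $X$. In particular, if a word $w$ in $S$ strongly traverses $X$, then $w$ is not a cyclic subword of any morpheme of $\Gamma$ in $S$ of length at most $r$.
   Context: A generating set excludes the identity $\mathbb{I}$ and is closed under inverses; $\mathrm{Cay}(\Gamma,S)$ is the simple graph on $\Gamma$ with edges $\{g,gs\}$. Ball $B_r(v)$: the subgraph of all vertices and edges on closed walks of length $\le r$ through $v$. For a 2-set $X=\{v_0,v_1\}$, $N(X)$ is the set of vertices outside $X$ adjacent to $X$; the connectivity graph $C_r(v_0,v_1)$ has vertex set $N(X)$, with $a,b$ adjacent if for some $i$ they lie in the same component of $B_r(v_i)-v_0-v_1$. $X$ is an $r$-local $2$-separator if $C_r(v_0,v_1)$ is disconnected and $d_G(v_0,v_1)\le r/2$; its $r$-local components are the components of $C_r(v_0,v_1)$. A traversal of $X$ is a walk whose two ends lie in distinct $r$-local components at $X$ and all of whose internal vertices lie in $X$; it is strong if it has exactly two internal vertices. A cycle (as a closed walk) strongly traverses $X$ if some cyclic subwalk of it (a subwalk of a cyclic rotation of it or of its reverse) is a strong traversal of $X$. A word $w=a_1\cdots a_k$ in $S$ strongly traverses $X$ if for some vertex $v$ the walk $v,va_1,va_1a_2,\ldots,va_1\cdots a_k$ has a subwalk that is a strong traversal of $X$. A morpheme of $\Gamma$ in $S$ is a nonempty word in $S$ evaluating to $\mathbb{I}$ none of whose nonempty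 proper contiguous subwords evaluates to $\mathbb{I}$. A word $u$ is a cyclic subword of $w$ if $u$ or $u^{-1}$ is a contiguous subword of a cyclic permutation of $w$. *)

From mathcomp Require Import all_boot.
Set Implicit Arguments. Unset Strict Implicit. Unset Printing Implicit Defensive.

Record group := Group {
  carrier :> Type;
  gmul : carrier -> carrier -> carrier;
  gone : carrier;
  ginv : carrier -> carrier;
  gmulA : forall x y z, gmul x (gmul y z) = gmul (gmul x y) z;
  gmul1 : forall x, gmul gone x = x;
  gmulV : forall x, gmul (ginv x) x = gone
}.

Section Graphs.
Variable V : Type.

(* membership / contiguous pieces of sequences, without decidable equality *)
Definition onw (v : V) (w : seq V) : Prop := exists p q, w = p ++ v :: q.
Definition infix_w (s w : seq V) : Prop := exists p q, w = p ++ s ++ q.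
Definition consec (w : seq V) (u x : V) : Prop := exists p q, w = p ++ u :: x :: q.

Fixpoint chain (R : V -> V -> Prop) (a : V) (t : seq V) : Prop :=
  match t with [::] => True | y :: t' => R a y /\ chain R y t' end.

Definition connects (P : V -> Prop) (R : V -> V -> Prop) (a b : V) : Prop :=
  exists t, P a /\ (forall u, onw u t -> P u) /\ chain R a t /\ last a t = b.

Variable adj : V -> V -> Prop.

Definition walk (w : seq V) : Prop :=
  match w with [::] => False | x :: t => chain adj x t end.
Definition wlen (w : seq V) : nat := (size w).-1.
Definition closed_walk (w : seq V) : Prop :=
  walk w /\ exists x t, w = x :: t /\ last x t = x.

Definition ball_vtx (r : nat) (v u : V) : Prop :=
  exists w, closed_walk w /\ wlen w <= r /\ onw v w /\ onw u w.
Definition ball_edge (r : nat) (v u x : V) : Prop :=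
  exists w, closed_walk w /\ wlen w <= r /\ onw v w /\ (consec w u x \/ consec w x u).

Definition outX (v0 v1 u : V) : Prop := u <> v0 /\ u <> v1.

Definition same_comp_ball (r : nat) (v v0 v1 a b : V) : Prop :=
  connects (fun u => ball_vtx r v u /\ outX v0 v1 u) (ball_edge r v) a b.

Definition nbhd (v0 v1 a : V) : Prop := outX v0 v1 a /\ (adj v0 a \/ adj v1 a).

Definition Cadj (r : nat) (v0 v1 a b : V) : Prop :=
  nbhd v0 v1 a /\ nbhd v0 v1 b /\
  (same_comp_ball r v0 v0 v1 a b \/ same_comp_ball r v1 v0 v1 a b).

Definition Cconn (r : nat) (v0 v1 a b : V) : Prop :=
  connects (nbhd v0 v1) (Cadj r v0 v1) a b.

Definition dist_le_half (r : nat) (v0 v1 : V) : Prop :=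
  exists x t, walk (x :: t) /\ x = v0 /\ last x t = v1 /\ 2 * wlen (x :: t) <= r.

Definition local_2sep (r : nat) (v0 v1 : V) : Prop :=
  v0 <> v1 /\
  (exists a b, nbhd v0 v1 a /\ nbhd v0 v1 b /\ ~ Cconn r v0 v1 a b) /\
  dist_le_half r v0 v1.

Definition strong_traversal (r : nat) (v0 v1 : V) (s : seq V) : Prop :=
  exists a x y b, s = [:: a; x; y; b] /\ walk s /\
    (x = v0 \/ x = v1) /\ (y = v0 \/ y = v1) /\
    nbhd v0 v1 a /\ nbhd v0 v1 b /\ ~ Cconn r v0 v1 a b.

(* cycles: sequences c_0..c_{n-1} of distinct vertices, n >= 3, with
   c_i ~ c_{i+1} and c_{n-1} ~ c_0; the closed walk is c_0..c_{n-1} c_0 *)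
Definition close_cyc (c : seq V) : seq V :=
  match c with [::] => [::] | x :: t => x :: t ++ [:: x] end.
Definition distinct (c : seq V) : Prop :=
  ~ exists p q t u, c = p ++ u :: q ++ u :: t.
Definition is_cycle (c : seq V) : Prop :=
  3 <= size c /\ distinct c /\ walk (close_cyc c).
Definition cyc_length (c : seq V) : nat := size c.

Definition cyclic_subwalk (s c : seq V) : Prop :=
  exists k, infix_w s (close_cyc (rot k c)) \/ infix_w s (rev (close_cyc (rot k c))).

Definition cycle_strongly_traverses (r : nat) (v0 v1 : V) (c : seq V) : Prop :=
  exists s, strong_traversal r v0 v1 s /\ cyclic_subwalk s c.

End Graphs.

Section Cayley.
Variable G : group.
Variable S : G -> Prop.

Definition word_in (w : seq G) : Prop := forall a, onw a w -> S a.
Definition eval_word (w : seq G) : G := foldr (@gmul G) (@gone G) w.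

Definition generating_set : Prop :=
  ~ S (@gone G) /\ (forall s, S s -> S (@ginv G s)) /\
  (forall g : G, exists w, word_in w /\ eval_word w = g).

Definition cay_adj (g h : G) : Prop := exists s, S s /\ (h = @gmul G g s \/ g = @gmul G h s).

Fixpoint word_walk (v : G) (w : seq G) : seq G :=
  match w with [::] => [:: v] | a :: t => v :: word_walk (@gmul G v a) t end.

Definition word_strongly_traverses (r : nat) (v0 v1 : G) (w : seq G) : Prop :=
  word_in w /\ exists v s, strong_traversal cay_adj r v0 v1 s /\ infix_w s (word_walk v w).

Definition morpheme (w : seq G) : Prop :=
  word_in w /\ w <> [::] /\ eval_word w = @gone G /\
  forall p u q, w = p ++ u ++ q -> u <> [::] -> (p <> [::] \/ q <> [::]) ->
    eval_word u <> @gone G.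

Definition word_inv (w : seq G) : seq G := rev (map (@ginv G) w).

Definition cyclic_subword (u w : seq G) : Prop :=
  exists k, infix_w u (rot k w) \/ infix_w (word_inv u) (rot k w).

End Cayley.

From mathcomp Require Import all_boot zify.
Set Implicit Arguments. Unset Strict Implicit. Unset Printing Implicit Defensive.

(* A cycle C of length at most r is a closed walk of length at most r through
   each of its vertices, so all of C lies in the ball B_r(v) for every v on C.
   If four consecutive vertices a, x, y, b of C strongly traverse X = {v0, v1},
   then {x, y} = X, and the rest of C is a path from b back to a that avoids X
   inside B_r(v0); so a and b are adjacent in C_r(v0, v1), a contradiction.
   Every cyclic subwalk of C of length at most |C| is, up to reversal, a window
   of the walk going twice around C.  A morpheme m traces from any base point a
   cycle of length |m| in the Cayley graph (by minimality its proper prefixes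
   have distinct values), and a walk along a cyclic subword of m, or of m^-1,
   is such a window of that cycle. *)

Lemma modn_neq_window n p q : p < q < p + n -> p %% n <> q %% n.
Proof.
case/andP=> lt_pq lt_q_pn E.
have [d def_q] : exists d, q = p + d by exists (q - p); lia.
move: E; rewrite def_q -{1}[p]addn0 => /eqP; rewrite eqn_modDl mod0n => /eqP.
rewrite modn_small; lia.
Qed.

Section Walks.
Variable V : Type.
Implicit Types s w c : seq V.

Lemma onw_nth (x0 : V) w j : j < size w -> onw (nth x0 w j) w.
Proof.
move=> lt_jw; exists (take j w), (drop j.+1 w).
by rewrite -(drop_nth x0 lt_jw) cat_take_drop.
Qed.

Lemma consec_nth (x0 : V) w j : j.+1 < size w -> consec w (nth x0 w j) (nth x0 w j.+1).
Proof.
move=> lt_jw; exists (take j w), (drop j.+2 w).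
by rewrite -(drop_nth x0 lt_jw) -(drop_nth x0 (ltnW lt_jw)) cat_take_drop.
Qed.

Lemma onw_nil (u : V) : ~ onw u [::].
Proof. by case=> [[|z p] [q]]. Qed.

Lemma onw_cons (u y : V) w : onw u (y :: w) -> u = y \/ onw u w.
Proof.
case=> [[|z p] [q E]]; first by case: E => ->; left.
by case: E => _ E; right; exists p, q.
Qed.

Lemma onw_seq1 (u y : V) : onw u [:: y] -> u = y.
Proof. by case=> [[|z [|? ?]] [q []]]. Qed.

Lemma onw_consr (u y : V) w : onw u w -> onw u (y :: w).
Proof. by case=> p [q ->]; exists (y :: p), q. Qed.

Lemma infix_w_trans s c w : infix_w s c -> infix_w c w -> infix_w s w.
Proof. by case=> p [q ->] [p' [q' ->]]; exists (p' ++ p), (q ++ q'); rewrite !catA. Qed.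

Lemma infix_w_rev s w : infix_w s w -> infix_w (rev s) (rev w).
Proof. by case=> p [q ->]; exists (rev q), (rev p); rewrite !rev_cat catA. Qed.

Lemma infix_w_size s w : infix_w s w -> size s <= size w.
Proof. by case=> p [q ->]; rewrite !size_cat; lia. Qed.

Lemma infix_w_window (x0 : V) (f : nat -> V) s w :
  (forall j, j < size w -> nth x0 w j = f j) -> infix_w s w ->
  exists i, s = map f (iota i (size s)).
Proof.
move=> wf [p [q def_w]]; exists (size p).
apply: (@eq_from_nth _ x0); first by rewrite size_map size_iota.
move=> t lt_ts; rewrite (nth_map 0) ?size_iota // nth_iota // -wf.
  by rewrite def_w nth_cat ltnNge leq_addr /= addKn nth_cat lt_ts.
by rewrite def_w !size_cat; lia.
Qed.

Lemma rot_infix_cat w k : infix_w (rot k w) (w ++ w).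
Proof.
by exists (take k w), (drop k w); rewrite -catA cat_take_drop catA cat_take_drop.
Qed.

Lemma close_cyc_rot_infix c k : infix_w (close_cyc (rot k c)) (c ++ close_cyc c).
Proof.
case: c => [|x t]; first by exists [::], [::].
set c := x :: t.
have [lt_kc|ge_kc] := ltnP k (size c); last first.
  by rewrite rot_oversize //; exists c, [::]; rewrite cats0.
have -> : close_cyc (rot k c) = drop k c ++ take k c ++ [:: nth x c k].
  by rewrite /rot (drop_nth x lt_kc) /= catA.
exists (take k c), (drop k.+1 c ++ [:: x]).
rewrite -!catA cat1s -cat_cons -(drop_nth x lt_kc) (catA (take k c)) cat_take_drop.
by rewrite (catA (take k c)) cat_take_drop.
Qed.

Lemma size_close_cyc c : 0 < size c -> size (close_cyc c) = (size c).+1.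
Proof. by case: c => //= y t _; rewrite size_cat addn1. Qed.

Lemma close_cyc_nth (x0 : V) c j :
  j <= size c -> nth x0 (close_cyc c) j = nth x0 c (j %% size c).
Proof.
case: c => [|y t]; first by case: j.
rewrite /= -cat_cons leq_eqVlt => /orP[/eqP->|lt_jt].
  by rewrite modnn nth_cat ltnn subnn.
by rewrite modn_small // nth_cat lt_jt.
Qed.

Lemma two_laps_nth (x0 : V) c j :
  j < size (c ++ close_cyc c) -> nth x0 (c ++ close_cyc c) j = nth x0 c (j %% size c).
Proof.
case: c => [|y t] //; set c := y :: t.
rewrite size_cat size_close_cyc // nth_cat => lt_j; case: ltnP => [lt_jc|le_cj].
  by rewrite modn_small.
rewrite close_cyc_nth; last lia.
by rewrite -(modnDr (j - size c)) subnK.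
Qed.

Lemma close_cyc_cat_behead c : close_cyc c ++ behead (close_cyc c) = c ++ close_cyc c.
Proof. by case: c => //= x t; rewrite -catA. Qed.

Lemma distinct_nth (x0 : V) c i j : distinct c -> i < j < size c -> nth x0 c i <> nth x0 c j.
Proof.
move=> D /andP[lt_ij lt_jc] E; apply: D.
exists (take i c), (take (j - i.+1) (drop i.+1 c)), (drop j.+1 c), (nth x0 c i).
rewrite -{1}(cat_take_drop i c) (drop_nth x0 (ltn_trans lt_ij lt_jc)); congr (_ ++ _ :: _).
rewrite -{1}(cat_take_drop (j - i.+1) (drop i.+1 c)) drop_drop subnK //.
by rewrite (drop_nth x0 lt_jc) E.
Qed.

Lemma nth_neq_distinct (x0 : V) c :
  (forall i j, i < j < size c -> nth x0 c i <> nth x0 c j) -> distinct c.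
Proof.
move=> neq [p [q [t [u def_c]]]].
apply: (neq (size p) (size p + (size q).+1)).
  by rewrite def_c !size_cat /= size_cat /=; lia.
by rewrite def_c nth_cat ltnn subnn nth_cat ltnNge leq_addr /= addKn /= nth_cat ltnn subnn.
Qed.

Lemma connects_path (P : V -> Prop) (R : V -> V -> Prop) (h : nat -> V) k :
  (forall j, j < k -> R (h j) (h j.+1)) -> (forall j, j <= k -> P (h j)) ->
  connects P R (h 0) (h k).
Proof.
elim: k h => [|k IHk] h hR hP.
  by exists [::]; split; [apply: hP | split=> // u /onw_nil].
have [t [_ [Pt [Rt last_t]]]] :=
  IHk (fun j => h j.+1) (fun j lt_jk => hR j.+1 lt_jk) (fun j le_jk => hP j.+1 le_jk).
exists (h 1 :: t); split; first exact: hP.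
split; last by split=> //; split=> //; apply: hR.
by move=> u /onw_cons [->|/Pt]; [apply: hP|].
Qed.

Lemma pair_cover (x y v0 v1 : V) : x <> y -> x = v0 \/ x = v1 -> y = v0 \/ y = v1 ->
  (v0 = x \/ v0 = y) /\ (v1 = x \/ v1 = y).
Proof. by move=> neq_xy [] ? [] ?; subst; [case: neq_xy | tauto | tauto | case: neq_xy]. Qed.

Section LocalComponents.
Variables (adj : V -> V -> Prop) (r : nat).

Lemma ball_edge_sym v u x : ball_edge adj r v u x -> ball_edge adj r v x u.
Proof. by case=> w [cw [lw [vw ux]]]; exists w; do !split=> //; tauto. Qed.

Lemma Cadj_Cconn v0 v1 a b : Cadj adj r v0 v1 a b -> Cconn adj r v0 v1 a b.
Proof.
move=> ab; have [na [nb _]] := ab; exists [:: b]; split=> //.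
split; last by split.
by move=> z /onw_seq1 ->.
Qed.

Section CycleWindows.
Variables (v0 v1 : V) (c : seq V) (x0 : V).
Hypotheses (c_cycle : is_cycle adj c) (c_short : size c <= r).
Local Notation n := (size c).
Let f j := nth x0 c (j %% n).

Lemma cycle_size_gt2 : 2 < n.
Proof. by case: c_cycle. Qed.

Lemma cycle_periodic j : f (j + n) = f j.
Proof. by rewrite /f modnDr. Qed.

Lemma cycle_neq p q : p < q < p + n -> f p <> f q.
Proof.
have [_ [c_distinct _]] := c_cycle; have n_gt0 : 0 < n by have := cycle_size_gt2; lia.
move=> pq; case: (ltngtP (p %% n) (q %% n)) => [lt_pq|lt_qp|eq_pq].
- by apply: distinct_nth; rewrite ?lt_pq ?ltn_pmod.
- by move/esym; apply: distinct_nth; rewrite ?lt_qp ?ltn_pmod.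
- by case: (modn_neq_window pq).
Qed.

Lemma cycle_closed_walk : closed_walk adj (close_cyc c).
Proof.
have [_ [_ c_walk]] := c_cycle; split=> //.
case: c cycle_size_gt2 => [|y t] // _; exists y, (t ++ [:: y]).
by rewrite last_cat.
Qed.

Lemma cycle_onw j : onw (f j) (close_cyc c).
Proof.
have n_gt0 : 0 < n by have := cycle_size_gt2; lia.
have lt_jn := ltn_pmod j n_gt0.
rewrite /f -(modn_mod j n) -close_cyc_nth ?(ltnW lt_jn) //.
by apply: onw_nth; rewrite size_close_cyc // ltnW.
Qed.

Lemma cycle_consec j : consec (close_cyc c) (f j) (f j.+1).
Proof.
have n_gt0 : 0 < n by have := cycle_size_gt2; lia.
have lt_jn := ltn_pmod j n_gt0.
have -> : f j.+1 = nth x0 (close_cyc c) (j %% n).+1.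
  by rewrite close_cyc_nth // /f -addn1 -modnDml addn1.
rewrite /f -(modn_mod j n) -close_cyc_nth ?(ltnW lt_jn) // modn_mod.
by apply: consec_nth; rewrite size_close_cyc.
Qed.

Lemma cycle_ball_vtx p j : ball_vtx adj r (f p) (f j).
Proof.
exists (close_cyc c); split; first exact: cycle_closed_walk.
by rewrite /wlen size_close_cyc; [split=> //; split; apply: cycle_onw | have := cycle_size_gt2; lia].
Qed.

Lemma cycle_ball_edge p j : ball_edge adj r (f p) (f j) (f j.+1).
Proof.
exists (close_cyc c); split; first exact: cycle_closed_walk.
rewrite /wlen size_close_cyc; last by have := cycle_size_gt2; lia.
by split=> //; split; [apply: cycle_onw | left; apply: cycle_consec].
Qed.

Lemma cycle_arc_connected i p : (forall j, i.+3 <= j <= i + n -> outX v0 v1 (f j)) ->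
  same_comp_ball adj r (f p) v0 v1 (f i.+3) (f i) /\
  same_comp_ball adj r (f p) v0 v1 (f i) (f i.+3).
Proof.
move=> arc_out; have n_gt2 := cycle_size_gt2.
split.
- have -> : f i = f (n - 3 + i.+3) by rewrite -cycle_periodic; congr f; lia.
  apply: (connects_path (h := fun j => f (j + i.+3))) => [j _ | j le_j].
    exact: cycle_ball_edge.
  by split; [apply: cycle_ball_vtx | apply: arc_out; lia].
- have -> : f i = f (i + n - 0) by rewrite subn0 cycle_periodic.
  have -> : f i.+3 = f (i + n - (n - 3)) by congr f; lia.
  apply: (connects_path (h := fun j => f (i + n - j))) => [j lt_j | j le_j].
    apply: ball_edge_sym; have -> : i + n - j = (i + n - j.+1).+1 by lia.
    exact: cycle_ball_edge.
  by split; [apply: cycle_ball_vtx | apply: arc_out; lia].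
Qed.

Lemma cycle_window_Cconn i :
  f i.+1 = v0 \/ f i.+1 = v1 -> f i.+2 = v0 \/ f i.+2 = v1 ->
  nbhd adj v0 v1 (f i) -> nbhd adj v0 v1 (f i.+3) ->
  Cconn adj r v0 v1 (f i) (f i.+3) /\ Cconn adj r v0 v1 (f i.+3) (f i).
Proof.
move=> X_i1 X_i2 N_i N_i3; have n_gt2 := cycle_size_gt2.
have [hv0 hv1] : (v0 = f i.+1 \/ v0 = f i.+2) /\ (v1 = f i.+1 \/ v1 = f i.+2).
  by apply: pair_cover X_i1 X_i2; apply: cycle_neq; lia.
have arc_out j : i.+3 <= j <= i + n -> outX v0 v1 (f j).
  move=> hj; have ne1 : f j <> f i.+1 by move/esym; apply: cycle_neq; lia.
  have ne2 : f j <> f i.+2 by move/esym; apply: cycle_neq; lia.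
  by split; [case: hv0 | case: hv1] => ->.
have [p def_v0] : exists p, v0 = f p by case: hv0 => ->; eexists.
have := cycle_arc_connected p arc_out; rewrite -def_v0 => -[conn_l conn_r].
by split; apply: Cadj_Cconn; (split; [|split]) => //; left.
Qed.

Lemma cycle_window_not_strong_traversal i :
  ~ strong_traversal adj r v0 v1 (map f (iota i 4)) /\
  ~ strong_traversal adj r v0 v1 (rev (map f (iota i 4))).
Proof.
split=> -[a [x [y [b [def_s [_ ST]]]]]].
- move: def_s ST => /= [<- <- <- <-] [X_x [X_y [N_a [N_b no_conn]]]].
  by apply: no_conn; case: (cycle_window_Cconn X_x X_y N_a N_b).
- move: def_s ST; rewrite /rev /= => -[<- <- <- <-] [X_x [X_y [N_a [N_b no_conn]]]].
  by apply: no_conn; case: (cycle_window_Cconn X_y X_x N_b N_a).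
Qed.

End CycleWindows.

Lemma cycle_two_laps_not_strong_traversal v0 v1 c s :
  is_cycle adj c -> size c <= r ->
  infix_w s (c ++ close_cyc c) \/ infix_w (rev s) (c ++ close_cyc c) ->
  ~ strong_traversal adj r v0 v1 s.
Proof.
case: c => [|x0 t]; first by case.
set c := x0 :: t => c_cycle c_short laps ST.
have size_s : size s = 4 by case: ST => [a [x [y [b [-> _]]]]].
have window u : infix_w u (c ++ close_cyc c) ->
    exists i, u = map (fun j => nth x0 c (j %% size c)) (iota i (size u)).
  exact/infix_w_window/two_laps_nth.
have no_window i := cycle_window_not_strong_traversal v0 v1 x0 c_cycle c_short i.
case: laps => /window [i def_s]; rewrite ?size_rev size_s in def_s.
- by apply: (no_window i).1; rewrite -def_s.
- by apply: (no_window i).2; rewrite -def_s revK.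
Qed.

Lemma cycle_not_strongly_traverses v0 v1 c :
  is_cycle adj c -> cyc_length c <= r -> ~ cycle_strongly_traverses adj r v0 v1 c.
Proof.
move=> c_cycle c_short [s [ST [k sub]]].
apply: (cycle_two_laps_not_strong_traversal c_cycle c_short _ ST).
have rot_two_laps := close_cyc_rot_infix c k.
case: sub => [fwd | /infix_w_rev bwd]; [left | right].
- exact: infix_w_trans fwd rot_two_laps.
- by rewrite revK in bwd; apply: infix_w_trans bwd rot_two_laps.
Qed.

End LocalComponents.
End Walks.

Section Cayley.
Variables (G : group) (S : G -> Prop).
Local Notation "x ** y" := (@gmul G x y) (at level 40, left associativity).
Local Notation one := (@gone G).
Local Notation inv := (@ginv G).
Implicit Types (u v x y : G) (w p q : seq G).

Lemma gmulgV x : x ** inv x = one.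
Proof.
have -> : x ** inv x = (inv (inv x) ** inv x) ** (x ** inv x) by rewrite gmulV gmul1.
by rewrite -gmulA (gmulA (inv x) x) gmulV gmul1 gmulV.
Qed.

Lemma gmulg1 x : x ** one = x.
Proof. by rewrite -(gmulV x) gmulA gmulgV gmul1. Qed.

Lemma gmulKg x y : inv x ** (x ** y) = y.
Proof. by rewrite gmulA gmulV gmul1. Qed.

Lemma gmulgKV x y : y ** inv x ** x = y.
Proof. by rewrite -gmulA gmulV gmulg1. Qed.

Lemma gmulgK x y : y ** x ** inv x = y.
Proof. by rewrite -gmulA gmulgV gmulg1. Qed.

Lemma gmulI x : injective (@gmul G x).
Proof. by move=> y z /(congr1 (@gmul G (inv x))); rewrite !gmulKg. Qed.

Lemma eval_word_cat p q : eval_word (p ++ q) = eval_word p ** eval_word q.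
Proof. by elim: p => [|b p IHp] /=; rewrite ?gmul1 ?IHp ?gmulA. Qed.

Lemma word_walk_head v w : word_walk v w = v :: behead (word_walk v w).
Proof. by case: w. Qed.

Lemma size_word_walk v w : size (word_walk v w) = (size w).+1.
Proof. by elim: w v => [|b w IHw] v //=; rewrite IHw. Qed.

Lemma nth_word_walk (x0 : G) v w j :
  j <= size w -> nth x0 (word_walk v w) j = v ** eval_word (take j w).
Proof.
elim: w v j => [|b w IHw] v [|j] //= le_jw; rewrite ?gmulg1 //.
by rewrite IHw // gmulA.
Qed.

Lemma word_walk_cat v p q :
  word_walk v (p ++ q) = word_walk v p ++ behead (word_walk (v ** eval_word p) q).
Proof.
elim: p v => [|b p IHp] v /=; first by rewrite gmulg1 -word_walk_head.
by rewrite IHp gmulA.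
Qed.

Lemma word_walk_infix v p w q :
  infix_w (word_walk (v ** eval_word p) w) (word_walk v (p ++ w ++ q)).
Proof.
elim: p v => [|b p IHp] v /=.
  by rewrite gmulg1 word_walk_cat; exists [::], (behead (word_walk (v ** eval_word w) q)).
by rewrite gmulA; case: (IHp (v ** b)) => P [Q ->]; exists (v :: P), Q.
Qed.

Lemma rev_word_walk v w :
  rev (word_walk v w) = word_walk (v ** eval_word w) (word_inv w).
Proof.
elim/last_ind: w v => [|w b IHw] v; first by rewrite /= gmulg1.
rewrite -cats1 word_walk_cat rev_cat /word_inv map_cat rev_cat -/(word_inv w) /=.
by rewrite eval_word_cat /= gmulg1 gmulA gmulgK IHw.
Qed.

Lemma word_in_walk v w : word_in S w -> walk (cay_adj S) (word_walk v w).
Proof.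
elim: w v => [|b w IHw] v //= Sbw.
have := IHw (v ** b) (fun x xw => Sbw x (onw_consr b xw)).
rewrite (word_walk_head (v ** b)) => walk_w; split=> //.
by exists b; split; [apply: Sbw; exists [::], w | left].
Qed.

Lemma morpheme_prefix_neq m i j :
  morpheme S m -> i < j < size m -> eval_word (take i m) <> eval_word (take j m).
Proof.
case=> _ [_ [_ proper]] /andP[lt_ij lt_jm] eq_ij.
set mid := drop i (take j m).
have def_tj : take j m = take i m ++ mid.
  by rewrite -{1}(cat_take_drop i (take j m)) take_takel // ltnW.
apply: (proper (take i m) mid (drop j m)).
- by rewrite catA -def_tj cat_take_drop.
- by move/(congr1 size); rewrite size_drop size_takel ?(ltnW lt_jm) //=; lia.
- by right; move/(congr1 size); rewrite size_drop /=; lia.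
- by apply: (@gmulI (eval_word (take i m))); rewrite -eval_word_cat -def_tj gmulg1.
Qed.

Section MorphemeCycle.
Variables (m0 : seq G) (a : G).
Hypothesis m_morph : morpheme S (rcons m0 a).
Local Notation m := (rcons m0 a).

Lemma eval_morpheme : eval_word m = one.
Proof. by case: m_morph => _ [_ []]. Qed.

Lemma close_cyc_morpheme_walk u : close_cyc (word_walk u m0) = word_walk u m.
Proof.
have last_u : u ** eval_word m0 ** a = u.
  by have := eval_morpheme; rewrite -cats1 eval_word_cat /= gmulg1 -gmulA => ->; rewrite gmulg1.
rewrite -cats1 word_walk_cat /= last_u {1}(word_walk_head u m0) /=.
by rewrite -cat_cons -word_walk_head.
Qed.

Lemma morpheme_walk_cycle u : 2 < size m -> is_cycle (cay_adj S) (word_walk u m0).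
Proof.
move=> m_gt2; split; first by rewrite size_word_walk -(size_rcons m0 a).
split; last by rewrite close_cyc_morpheme_walk; apply: word_in_walk; case: m_morph.
apply: (nth_neq_distinct (x0 := u)) => i j; rewrite size_word_walk ltnS => /andP[lt_ij le_j].
have le_i := ltnW (leq_trans lt_ij le_j).
rewrite !nth_word_walk // => /gmulI.
rewrite -(takel_cat [:: a] le_i) -(takel_cat [:: a] le_j) cats1.
by apply: morpheme_prefix_neq m_morph _; rewrite lt_ij size_rcons.
Qed.

Lemma morpheme_walk_two_laps u :
  word_walk u (m ++ m) = word_walk u m0 ++ close_cyc (word_walk u m0).
Proof.
by rewrite word_walk_cat eval_morpheme gmulg1 -close_cyc_morpheme_walk close_cyc_cat_behead.
Qed.

Lemma morpheme_subwalk_two_laps v w t :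
  infix_w w (m ++ m) -> infix_w t (word_walk v w) ->
  exists u, infix_w t (word_walk u m0 ++ close_cyc (word_walk u m0)).
Proof.
case=> p [q def_mm] sub_t; exists (v ** inv (eval_word p)).
rewrite -morpheme_walk_two_laps def_mm; apply: (infix_w_trans sub_t).
by rewrite -{1}[v](gmulgKV (eval_word p)); apply: word_walk_infix.
Qed.

End MorphemeCycle.

Lemma morpheme_no_strongly_traversing_subword r v0 v1 w m :
  word_strongly_traverses S r v0 v1 w -> morpheme S m -> size m <= r ->
  ~ cyclic_subword w m.
Proof.
move=> [_ [v [s [ST sub_s]]]]; case/lastP: m => [|m0 a]; first by case=> _ [].
move=> m_morph m_short [k sub_w].
have size_w : size w <= size (rcons m0 a).
  by case: sub_w => /infix_w_size; rewrite size_rot // /word_inv size_rev size_map.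
have m_gt2 : 2 < size (rcons m0 a).
  have := infix_w_size sub_s; rewrite size_word_walk.
  by case: ST => [b [x [y [b' [-> _]]]]] /=; lia.
have [u two_laps] : exists u,
    infix_w s (word_walk u m0 ++ close_cyc (word_walk u m0)) \/
    infix_w (rev s) (word_walk u m0 ++ close_cyc (word_walk u m0)).
  case: sub_w => /infix_w_trans/(_ (rot_infix_cat _ k)) sub_w.
  - by have [u laps] := morpheme_subwalk_two_laps m_morph sub_w sub_s; exists u; left.
  - have := infix_w_rev sub_s; rewrite rev_word_walk => sub_rs.
    by have [u laps] := morpheme_subwalk_two_laps m_morph sub_w sub_rs; exists u; right.
apply: cycle_two_laps_not_strong_traversal (morpheme_walk_cycle m_morph u m_gt2) _ two_laps ST.
by rewrite size_word_walk -(size_rcons m0 a).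
Qed.

End Cayley.

Theorem lemma5p10 (G : group) (S : G -> Prop) (r : nat) (v0 v1 : G) :
  generating_set S -> 2 <= r ->
  local_2sep (cay_adj S) r v0 v1 ->
  (forall c : seq G, is_cycle (cay_adj S) c -> cyc_length c <= r ->
     ~ cycle_strongly_traverses (cay_adj S) r v0 v1 c) /\
  (forall w : seq G, word_strongly_traverses S r v0 v1 w ->
     forall m : seq G, morpheme S m -> size m <= r -> ~ cyclic_subword w m).
Proof.
move=> _ _ _; split=> [c | w w_trav m].
- exact: cycle_not_strongly_traverses.
- exact: morpheme_no_strongly_traversing_subword w_trav.
Qed.
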